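(* Every forest of order $n$ has at most $4^{n/5}$ perfect total dominating sets. The bound is attained by disjoint unions of stars on $5$ vertices ($K_{1,4}$).
   Context: A perfect total dominating set of a graph $G=(V,E)$ is a set $D\subseteq V$ such that every vertex of $V$ (whether in $D$ or not) has exactly one neighbour in $D$. Order = number of vertices. *)

From mathcomp Require Import all_boot.
Set Implicit Arguments. Unset Strict Implicit. Unset Printing Implicit Defensive.

Definition simple_graph (T : finType) (e : rel T) : Prop :=
  symmetric e /\ irreflexive e.

Definition has_cycle (T : finType) (e : rel T) : Prop :=
  exists p : seq T, [/\ uniq p, 3 <= size p & cycle e p].

Definition forest (T : finType) (e : rel T) : Prop :=
  simple_graph e /\ ~ has_cycle e.

Definition nbhd (T : finType) (e : rel T) (v : T) : {set T} := [set u | e v u].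

Definition perfect_total_dominating (T : finType) (e : rel T) (D : {set T}) : bool :=
  [forall v, #|nbhd e v :&: D| == 1].

Definition num_ptds (T : finType) (e : rel T) : nat :=
  #|[set D : {set T} | perfect_total_dominating e D]|.

(* Disjoint union of k copies of the star K_{1,4}: vertices (i, a) with
   i : 'I_k the copy and a : 'I_5; vertex a = 0 is the centre. *)
Definition star_forest_edge (k : nat) : rel (prod (ordinal k) (ordinal 5)) :=
  fun x y => (x.1 == y.1) && ((val x.2 == 0) != (val y.2 == 0)).
Arguments star_forest_edge k : clear implicits.

From mathcomp Require Import all_boot zify.
Set Implicit Arguments. Unset Strict Implicit. Unset Printing Implicit Defensive.

(* We count, for a vertex set S, the sets D included in S such that every
   vertex of S has exactly one neighbour in D ("PTDS of S"); for S = V these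
   are the PTDS of the graph.  The bound  #PTDS(S)^5 <= 4^|S|  is proved by
   induction on |S|.  If S spans no edge, there is at most one such D.
   Otherwise a longest path of G[S] yields a vertex u with a pendant neighbour
   and a neighbour w such that every other neighbour of u is pendant.  Every
   PTDS D contains u and exactly one neighbour y of u; deleting u and its
   neighbourhood N (and, when y = w, also the neighbours of w) leaves a set
   S1 (resp. S2) on which D restricts injectively to a PTDS.  Hence
   #PTDS(S) <= |N| * max(#PTDS(S1), #PTDS(S2)), and |N|^5 <= 4^(|N|+1)
   closes the induction.  Finally, k disjoint stars K_{1,4} form a forest
   with exactly 4^k PTDS: all centres plus one leaf per star. *)

Definition ptds_on (T : finType) (e : rel T) (S D : {set T}) : bool :=
  (D \subset S) && [forall v in S, #|nbhd e v :&: D| == 1].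

Definition num_ptds_on (T : finType) (e : rel T) (S : {set T}) : nat :=
  #|[set D | ptds_on e S D]|.

Lemma num_ptds_on_setT (T : finType) (e : rel T) : num_ptds e = num_ptds_on e setT.
Proof.
apply: eq_card => D; rewrite !inE /ptds_on subsetT.
apply/forallP/forallP => D1 v; first by apply/implyP => _; apply: D1.
exact: (implyP (D1 v)).
Qed.

Lemma card_bigcup_leq (T I : finType) (A : pred I) (F : I -> {set T}) :
  #|\bigcup_(i in A) F i| <= \sum_(i in A) #|F i|.
Proof.
elim/big_rec2: _ => [|i y x _ h]; first by rewrite cards0.
by apply: leq_trans (leq_card_setU _ _) _; apply: leq_add.
Qed.

Section PtdsOn.
Variables (T : finType) (e : rel T) (S : {set T}).

Lemma ptds_on_sub D : ptds_on e S D -> D \subset S.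
Proof. by case/andP. Qed.

Lemma ptds_on_exists D v : ptds_on e S D -> v \in S -> exists2 z, e v z & z \in D.
Proof.
case/andP=> _ /forallP/(_ v) D1 vS; move: D1; rewrite vS => /cards1P [z Dz].
by have := set11 z; rewrite -Dz !inE => /andP [evz zD]; exists z.
Qed.

Lemma ptds_on_unique D v a b : ptds_on e S D -> v \in S ->
  e v a -> a \in D -> e v b -> b \in D -> a = b.
Proof.
case/andP=> _ /forallP/(_ v) D1 vS eva aD evb bD; move: D1; rewrite vS.
case/cards1P=> z Dz.
have : a \in [set z] by rewrite -Dz !inE eva aD.
have : b \in [set z] by rewrite -Dz !inE evb bD.
by rewrite !inE => /eqP -> /eqP ->.
Qed.

(* Restriction principle: if the members of a family F of PTDS of S are all
   of the form (D :&: S') :|: X, and D-neighbours of vertices of S' lie in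
   S', then D |-> D :&: S' embeds F into the PTDS of S'. *)
Lemma num_ptds_on_restrict (F : {set {set T}}) (S' X : {set T}) :
  S' \subset S ->
  (forall D, D \in F -> [/\ ptds_on e S D, X \subset D, D \subset S' :|: X &
     forall v z, v \in S' -> z \in D -> e v z -> z \in S']) ->
  #|F| <= num_ptds_on e S'.
Proof.
move=> sS'S hF.
have restrK : {in F, forall D, (D :&: S') :|: X = D}.
  move=> D /hF [_ sXD sDS'X _].
  by rewrite setUIl (setUidPl sXD); apply/setIidPl.
rewrite -(card_in_imset (f := fun D => D :&: S')); last first.
  by move=> D1 D2 F1 F2 /= E; rewrite -(restrK D1) // -(restrK D2) // E.
apply/subset_leq_card/subsetP => _ /imsetP [D /hF [ptD _ _ inS'] ->].
rewrite inE /ptds_on subsetIr; apply/forallP => v; apply/implyP => vS'.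
have -> : nbhd e v :&: (D :&: S') = nbhd e v :&: D.
  apply/setP => z; rewrite !inE.
  by case evz: (e v z); case zD: (z \in D); rewrite //= (inS' v z).
by case/andP: ptD => _ /forallP/(_ v); rewrite (subsetP sS'S v vS').
Qed.

(* A vertex set without internal edges admits a perfect total dominating set
   only when it is empty (and then only the empty set). *)
Lemma num_ptds_on_edgeless :
  (forall v v', v \in S -> v' \in S -> ~~ e v v') ->
  num_ptds_on e S ^ 5 <= 4 ^ #|S|.
Proof.
move=> noedge; have [-> | [v vS]] := set_0Vmem S.
  rewrite cards0; suff : num_ptds_on e set0 <= 1 by case: num_ptds_on => [|[]].
  rewrite -(cards1 (@set0 T)); apply/subset_leq_card/subsetP => D.
  by rewrite !inE /ptds_on subset0 => /andP [/eqP -> _].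
suff -> : num_ptds_on e S = 0 by rewrite exp0n.
apply/eqP; rewrite cards_eq0; apply/eqP/setP => D; rewrite !inE.
apply/negP => ptD; have [z evz zD] := ptds_on_exists ptD vS.
by move: (noedge v z vS (subsetP (ptds_on_sub ptD) z zD)); rewrite evz.
Qed.

End PtdsOn.

Section LongestPath.
Variables (T : finType) (e : rel T).
Hypotheses (esym : symmetric e) (eirr : irreflexive e) (acyc : ~ has_cycle e).

Definition induced_path (S : {set T}) (s : seq T) : bool :=
  [&& uniq s, all (fun x => x \in S) s & sorted e s].

Lemma path_no_chord a b q z :
  path e a (b :: q) -> uniq [:: a, b & q] -> z \in q -> ~~ e a z.
Proof.
move=> pq uq zq; apply/negP => eaz; apply: acyc.
move: pq uq; case/splitPr: zq => q1 q2 pq uq.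
exists [:: a, b & rcons q1 z]; split; last 1 first.
- move: pq; rewrite -cat_cons -cat_rcons cat_path => /andP [pq _].
  by rewrite /cycle rcons_path (pq : path e a (b :: rcons q1 z)) /= last_rcons esym.
- by move: uq; rewrite -cat_cons -cat_cons -cat_rcons cat_uniq => /andP [].
- by rewrite /= size_rcons.
Qed.

Lemma longest_induced_path S s : induced_path S s ->
  exists p, [/\ induced_path S p, size s <= size p &
                forall t, induced_path S t -> size t <= size p].
Proof.
move=> ps; pose P n := [exists t : n.-tuple T, induced_path S t].
have Pt t : induced_path S t -> P (size t).
  by move=> pt; apply/existsP; exists (in_tuple t).
have ubP n : P n -> n <= #|T|.
  case/existsP=> t /and3P [/card_uniqP tcard _ _].
  by rewrite -(size_tuple t) -tcard max_card.
case: (ex_maxnP (ex_intro P _ (Pt s ps)) ubP) => m /existsP [p pp] maxm.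
exists p; rewrite size_tuple; split => //; last by move=> t /Pt /maxm.
exact: maxm (Pt s ps).
Qed.

(* In a longest induced path x0, x1, ..., the end x0 has no neighbour in S
   besides x1: a neighbour on the path closes a cycle, one off the path
   extends the path. *)
Lemma longest_path_end S x0 x1 q z :
  induced_path S [:: x0, x1 & q] ->
  (forall t, induced_path S t -> size t <= (size q).+2) ->
  z \in S -> e x0 z -> z = x1.
Proof.
move=> /and3P [up ap sp] maxp zS ez.
case: (boolP (z \in [:: x0, x1 & q])) => [|zn].
  rewrite !inE => /or3P [/eqP zx0 | /eqP // | zq]; first by rewrite zx0 eirr in ez.
  by move: (path_no_chord sp up zq); rewrite ez.
suff : (size q).+3 <= (size q).+2 by rewrite ltnn.
apply: (maxp [:: z, x0, x1 & q]).
by rewrite /induced_path /= zn zS esym ez; rewrite /= in up ap sp; rewrite up ap sp.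
Qed.

Definition pendant (S : {set T}) (y u : T) : Prop :=
  forall z, z \in S -> e y z -> z = u.

(* Every induced subgraph with an edge contains a vertex u with a pendant
   neighbour y0 and a neighbour w such that all other neighbours of u are
   pendant too: take u second on a longest path, and w third (or first). *)
Lemma pendant_star (S : {set T}) v v' : v \in S -> v' \in S -> e v v' ->
  exists u w y0, [/\ u \in S, w \in S, e u w, y0 \in S & pendant S y0 u] /\
    forall y, y \in S -> e u y -> y != w -> pendant S y u.
Proof.
move=> vS v'S evv'.
have pv : induced_path S [:: v; v'].
  rewrite /induced_path /= !inE vS v'S evv' !andbT.
  by apply/eqP => vv'; rewrite vv' eirr in evv'.
have [p [pp sizep maxp]] := longest_induced_path pv.
case: p pp sizep maxp => [|x0 [|x1 q]] //= pp _ maxp.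
have /and3P [/= /and3P [_ x1q uq] /and3P [x0S x1S aq] /andP [ex01 sq]] := pp.
have endp := longest_path_end pp maxp.
exists x1, (head x0 q), x0; split; [split | ] => //; rewrite 1?esym //.
- by case: q x1q uq aq sq {pp maxp endp} => //= x2 q' _ _ /andP [].
- case: q x1q uq aq sq {pp maxp endp} => [|x2 q'] //= _ _ _ /andP [e12 _].
  by rewrite esym.
move=> y yS ey ynw z zS eyz.
have [yx0 | ynx0] := eqVneq y x0; first by subst y; exact: endp.
have [yq | ynq] := boolP (y \in q).
  case: q x1q uq sq ynw yq {pp maxp endp aq} => //= x2 q' x1q uq sq ynw.
  rewrite inE (negbTE ynw) /= => yq'.
  have uq' : uniq [:: x1, x2 & q'] by rewrite [uniq _]/= x1q.
  by move: (path_no_chord sq uq' yq'); rewrite ey.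
have pp' : induced_path S [:: y, x1 & q].
  rewrite /induced_path /= inE negb_or ynq x1q uq yS x1S aq esym ey sq !andbT.
  by apply: contraTneq ey => ->; rewrite eirr.
exact: (longest_path_end pp' maxp zS eyz).
Qed.

End LongestPath.

Section PendantStarStep.
Variables (T : finType) (e : rel T) (S : {set T}) (u w y0 : T).
Hypotheses (esym : symmetric e) (eirr : irreflexive e).
Hypotheses (uS : u \in S) (wS : w \in S) (euw : e u w).
Hypotheses (y0S : y0 \in S) (y0_pendant : pendant e S y0 u).
Hypothesis others_pendant : forall y, y \in S -> e u y -> y != w -> pendant e S y u.

Let N := S :&: nbhd e u.
Let S1 := S :\: (u |: N).
Let S2 := S1 :\: nbhd e w.
Let A y := [set D | ptds_on e S D & y \in D].

Lemma mem_S1 x : (x \in S1) = [&& x \in S, x != u & ~~ e u x].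
Proof. by rewrite !inE negb_or; case: (x \in S); rewrite ?andbF ?andbT. Qed.

Lemma mem_S2 x : (x \in S2) = (x \in S1) && ~~ e w x.
Proof. by rewrite in_setD inE andbC. Qed.

Lemma card_S_split : #|S| = #|S1| + #|N| + 1.
Proof.
have uN : u \notin N by rewrite !inE eirr andbF.
have sub : u |: N \subset S by rewrite subUset sub1set uS subsetIl.
by rewrite -(cardsID (u |: N) S) (setIidPr sub) cardsU1 uN addnC addn1 addnS.
Qed.

(* The pendant neighbour y0 forces u into every dominating set. *)
Lemma ptds_on_support D : ptds_on e S D -> u \in D.
Proof.
move=> ptD; have [z ey0z zD] := ptds_on_exists ptD y0S.
by rewrite -(y0_pendant (subsetP (ptds_on_sub ptD) z zD) ey0z).
Qed.

Lemma ptds_on_cover : [set D | ptds_on e S D] \subset \bigcup_(y in N) A y.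
Proof.
apply/subsetP => D; rewrite inE => ptD; have [z euz zD] := ptds_on_exists ptD uS.
have zS := subsetP (ptds_on_sub ptD) z zD.
by apply/bigcupP; exists z; rewrite !inE ?zS ?euz ?ptD.
Qed.

(* If u's dominating neighbour y is pendant, D is determined by its trace
   on S1, which dominates S1. *)
Lemma card_A_pendant y : y \in N -> y != w -> #|A y| <= num_ptds_on e S1.
Proof.
rewrite inE => /andP [yS]; rewrite inE => euy ynw.
apply: (num_ptds_on_restrict (S := S) (X := [set u; y])) => [|D].
  by apply/subsetP => x; rewrite mem_S1 => /andP [].
rewrite inE => /andP [ptD yD]; have uD := ptds_on_support ptD.
have uniq_u := ptds_on_unique ptD uS.
split => //; first by rewrite subUset !sub1set uD yD.
  apply/subsetP => x xD; rewrite in_setU mem_S1 !inE (subsetP (ptds_on_sub ptD) x xD).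
  have [-> | xnu] := eqVneq x u; first by [].
  by case exu: (e u x) => /=; rewrite ?(uniq_u x y exu xD euy yD) ?eqxx ?orbT.
move=> v z; rewrite !mem_S1 => /and3P [vS vnu nevu] zD evz.
rewrite (subsetP (ptds_on_sub ptD) z zD) /=; apply/andP; split.
  by apply: contraNneq nevu => zu; rewrite -zu esym.
apply/negP => euz; have zy := uniq_u z y euz zD euy yD.
by move/eqP: vnu; apply; apply: (others_pendant yS euy ynw vS); rewrite -zy esym.
Qed.

(* If u is dominated by w, D is determined by its trace on S2, which
   dominates S2. *)
Lemma card_A_w : #|A w| <= num_ptds_on e S2.
Proof.
apply: (num_ptds_on_restrict (S := S) (X := [set u; w])) => [|D].
  by apply/subsetP => x; rewrite mem_S2 mem_S1 => /andP [/andP []].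
rewrite inE => /andP [ptD wD]; have uD := ptds_on_support ptD.
have uniq_u := ptds_on_unique ptD uS; have uniq_w := ptds_on_unique ptD wS.
have ewu : e w u by rewrite esym.
split => //; first by rewrite subUset !sub1set uD wD.
  apply/subsetP => x xD.
  rewrite in_setU mem_S2 mem_S1 !inE (subsetP (ptds_on_sub ptD) x xD).
  have [-> | xnu] := eqVneq x u; first by [].
  case exu: (e u x) => /=; first by rewrite (uniq_u x w exu xD euw wD) eqxx.
  by case ewx: (e w x) => //; case/eqP: xnu; apply: (uniq_w x u ewx xD ewu uD).
move=> v z; rewrite !mem_S2 !mem_S1 => /andP [/and3P [vS vnu nevu] newv] zD evz.
rewrite (subsetP (ptds_on_sub ptD) z zD) /=.
have znu : z != u by apply: contraNneq nevu => zu; rewrite -zu esym.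
have nuz : ~~ e u z.
  by apply/negP => euz; rewrite -(uniq_u z w euz zD euw wD) esym evz in newv.
rewrite znu nuz /=; apply/negP => ewz.
by case/eqP: znu; apply: (uniq_w z u ewz zD ewu uD).
Qed.

(* The branching bound: |N| choices for y, each leaving a smaller problem. *)
Lemma num_ptds_on_pendant_star :
  num_ptds_on e S <= #|N| * maxn (num_ptds_on e S1) (num_ptds_on e S2).
Proof.
apply: leq_trans (subset_leq_card ptds_on_cover) _.
apply: leq_trans (card_bigcup_leq _ _) _.
rewrite -sum_nat_const; apply: leq_sum => y yN.
have [-> | ynw] := eqVneq y w; first by rewrite leq_max card_A_w orbT.
by rewrite leq_max card_A_pendant.
Qed.

End PendantStarStep.

(* The numerical heart of the bound: k pendant choices at a vertex cost a
   factor k, and k <= 4^((k+1)/5). *)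
Lemma pow5_le_pow4 k : k ^ 5 <= 4 ^ k.+1.
Proof.
have step j : j.+4.+1 ^ 5 <= 4 * j.+4 ^ 5 by rewrite !expnS expn0 !muln1; nia.
case: k => [|[|[|[|k]]]] //; elim: k => [|k IH] //.
by rewrite expnS; apply: leq_trans (step k) (leq_mul (leqnn 4) IH).
Qed.

Lemma pow5_branching a n m s : a <= n * m -> m ^ 5 <= 4 ^ s -> a ^ 5 <= 4 ^ (s + n + 1).
Proof.
move=> le_a le_m; rewrite addn1 -addnS expnD.
apply: leq_trans (_ : (m * n) ^ 5 <= _); first by rewrite leq_exp2r // mulnC.
by rewrite expnMn leq_mul ?pow5_le_pow4.
Qed.

Theorem num_ptds_on_forest (T : finType) (e : rel T) :
  forest e -> forall S : {set T}, num_ptds_on e S ^ 5 <= 4 ^ #|S|.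
Proof.
move=> [[esym eirr] acyc] S; have [n] := ubnP #|S|; elim: n S => // n IH S ltSn.
have [/existsP [v /andP [vS /existsP [v' /andP [v'S evv']]]] | noedge] :=
  boolP [exists v in S, [exists v' in S, e v v']]; last first.
  apply: num_ptds_on_edgeless => v v' vS v'S; apply: contraNN noedge => evv'.
  by apply/existsP; exists v; rewrite vS; apply/existsP; exists v'; rewrite v'S.
have [u [w [y0 [[uS wS euw y0S y0p] others]]]] := pendant_star esym eirr acyc vS v'S evv'.
set N := S :&: nbhd e u; set S1 := S :\: (u |: N); set S2 := S1 :\: nbhd e w.
have cardS : #|S| = #|S1| + #|N| + 1 := card_S_split eirr uS.
have ltS1 : #|S1| < n by move: ltSn; rewrite cardS; lia.
have le21 : #|S2| <= #|S1| by apply/subset_leq_card/subsetDl.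
have branch := num_ptds_on_pendant_star esym uS wS euw y0S y0p others.
rewrite cardS; apply: (pow5_branching branch).
case: (leqP (num_ptds_on e S1) (num_ptds_on e S2)) => _.
  exact: leq_trans (IH S2 (leq_ltn_trans le21 ltS1)) (leq_pexp2l _ le21).
exact: IH S1 ltS1.
Qed.

Theorem num_ptds_forest (T : finType) (e : rel T) :
  forest e -> num_ptds e ^ 5 <= 4 ^ #|T|.
Proof.
by move=> forest_e; rewrite num_ptds_on_setT -cardsT; apply: num_ptds_on_forest.
Qed.

Section StarForest.
Variable k : nat.
Local Notation V := ('I_k * 'I_5)%type.
Local Notation star := (star_forest_edge k).

Lemma star_sym : symmetric star.
Proof.
move=> x y; rewrite /star_forest_edge eq_sym; congr (_ && _).
by case: (val x.2 == 0); case: (val y.2 == 0).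
Qed.

Lemma star_leaf_nbr (x y : V) : val x.2 != 0 -> star x y -> y = (x.1, ord0).
Proof.
rewrite /star_forest_edge => /negbTE xleaf /andP [/eqP xy1].
rewrite xleaf; case: y xy1 => [i a] /= <-; case: (val a =P 0) => // a0 _.
by congr (_, _); apply: val_inj.
Qed.

(* A cycle would pass through a leaf, whose two cycle neighbours must both be
   the centre of its star. *)
Lemma star_forest_is_forest : forest star.
Proof.
have eirr : irreflexive star by move=> x; rewrite /star_forest_edge !eqxx.
split; first by split; [exact: star_sym | exact: eirr].
case=> [[|x0 [|x1 [|x2 r]]] [up sz]] //.
rewrite /cycle rcons_path /= => /andP [/and3P [e01 e12 _] el].
have [x1leaf | x1centre] := boolP (val x1.2 != 0).
  move: up; rewrite star_sym in e01.
  by rewrite (star_leaf_nbr x1leaf e01) (star_leaf_nbr x1leaf e12) /= !inE eqxx !orbT.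
have x0leaf : val x0.2 != 0.
  move: e01 x1centre; rewrite /star_forest_edge.
  by case: (val x0.2 =P 0); case: (val x1.2 =P 0); rewrite ?andbF.
rewrite star_sym in el.
move: up; rewrite /= (star_leaf_nbr x0leaf e01) -(star_leaf_nbr x0leaf el) mem_last.
by rewrite andbF.
Qed.

Definition star_ptds (f : {ffun 'I_k -> 'I_4}) : {set V} :=
  [set x | (val x.2 == 0) || (val x.2 == (f x.1).+1)].

Lemma star_ptds_ptds f : perfect_total_dominating star (star_ptds f).
Proof.
apply/forallP => [[i a]]; apply/cards1P.
have fi5 : (f i).+1 < 5 by rewrite ltnS ltn_ord.
case a0: (val a == 0).
  exists (i, inord (f i).+1); apply/setP => [[j b]]; rewrite !inE /star_forest_edge /=.
  rewrite xpair_eqE a0 eq_sym; case: (eqVneq j i) => [->|] //=.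
  by rewrite -val_eqE /= inordK //; case: (val b =P 0) => [->|].
exists (i, ord0); apply/setP => [[j b]]; rewrite !inE /star_forest_edge /=.
rewrite xpair_eqE a0 eq_sym; case: (eqVneq j i) => [->|] //=.
by rewrite -val_eqE /=; case: (val b =P 0) => [->|].
Qed.

Lemma star_ptds_inj : injective star_ptds.
Proof.
move=> f g E; apply/ffunP => i.
have fi5 : (f i).+1 < 5 by rewrite ltnS ltn_ord.
have : (i, inord (f i).+1) \in star_ptds g by rewrite -E inE /= inordK // eqxx orbT.
by rewrite inE /= inordK //= eqSS => /eqP fg; apply: val_inj.
Qed.

Lemma num_ptds_star_forest_ge : 4 ^ k <= num_ptds star.
Proof.
have -> : 4 ^ k = #|{ffun 'I_k -> 'I_4}| by rewrite card_ffun !card_ord.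
rewrite -(card_imset _ star_ptds_inj).
apply/subset_leq_card/subsetP => _ /imsetP [f _ ->]; rewrite inE; exact: star_ptds_ptds.
Qed.

Lemma num_ptds_star_forest : num_ptds star = 4 ^ k.
Proof.
apply/eqP; rewrite eqn_leq num_ptds_star_forest_ge andbT.
rewrite -(leq_exp2r _ _ (isT : 0 < 5)) -expnM mulnC.
have := num_ptds_forest star_forest_is_forest.
by rewrite card_prod !card_ord mulnC.
Qed.

End StarForest.

Theorem mainTheorem19 :
  (forall (T : finType) (e : rel T), forest e ->
     num_ptds e ^ 5 <= 4 ^ #|T|) /\
  (forall k : nat,
     forest (star_forest_edge k) /\
     #|{: 'I_k * 'I_5}| = 5 * k /\
     num_ptds (star_forest_edge k) = 4 ^ k).
Proof.
split=> [T e | k]; first exact: num_ptds_forest.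
split; first exact: star_forest_is_forest.
by rewrite card_prod !card_ord mulnC num_ptds_star_forest.
Qed.
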